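(* Consider the reduced maps of the Bowtie network described in the context, with $\delta<0$, $\tilde\delta<0$ and $e_{23}>e_{24}$. Then there exist points $(x_3,x_4,x_5)\in(0,1)^3$ with $x_4>x_3^{e_{24}/e_{23}}$ (i.e.\ not in $\tilde{\mathcal{E}}_1$) such that $g_{RL}(x_3,x_4,x_5)\notin\mathcal{E}_1$, and there also exist points $(x_3,x_4,x_5)\in(0,1)^3$ with $x_4>x_3^{e_{24}/e_{23}}$ such that $g_{RL}(x_3,x_4,x_5)\in\mathcal{E}_1$. (That is, both transitions $RLR$ and $RLL$ occur.)
   Context: Setting (Bowtie network). A $\mathbb{Z}_2^5$-equivariant vector field on $\mathbb{R}^5$ has equilibria $\xi_j$ on the $x_j$-axes and two heteroclinic cycles $R=[\xi_1\to\xi_2\to\xi_3\to\xi_1]$ and $L=[\xi_2\to\xi_4\to\xi_5\to\xi_2]$, each connection $[\xi_i\to\xi_j]$ lying in the $x_ix_j$-plane. All eigenvalues are real: at $\xi_j$, $-c_{jk}<0$ is the contracting and $e_{jk}>0$ the expanding eigenvalue in the $x_k$-direction (positive numbers $e_{12},c_{13},c_{14},c_{15}$; $c_{21},c_{25},e_{23},e_{24}$; $e_{31},c_{32},c_{34},c_{35}$; $e_{45},c_{41},c_{42},c_{43}$; $e_{52},c_{51},c_{53},c_{54}$ at $\xi_1,\dots,\xi_5$ respectively). Global maps are the identity and local maps are given by the linearized flow. Define $\rho=\frac{c_{42}c_{54}c_{25}}{e_{24}e_{45}e_{52}}$, $\tilde\rho=\frac{c_{32}c_{13}c_{21}}{e_{23}e_{31}e_{12}}$,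 $\nu=-\frac{e_{23}}{e_{24}}+\frac{c_{25}c_{43}}{e_{24}e_{45}}+\frac{c_{53}c_{42}c_{25}}{e_{45}e_{24}e_{52}}$, $\mu=\frac{c_{21}}{e_{24}}+\frac{c_{25}c_{41}}{e_{24}e_{45}}+\frac{c_{51}c_{42}c_{25}}{e_{45}e_{24}e_{52}}$, $\delta=\frac{c_{43}}{e_{45}}+\frac{c_{53}c_{42}}{e_{52}e_{45}}-\frac{e_{23}c_{54}c_{42}}{e_{52}e_{45}e_{24}}$, $\tilde\delta=\frac{c_{34}}{e_{31}}+\frac{c_{14}c_{32}}{e_{12}e_{31}}-\frac{e_{24}c_{13}c_{32}}{e_{12}e_{31}e_{23}}$, $\alpha=\frac{c_{41}}{e_{45}}+\frac{c_{42}c_{51}}{e_{45}e_{52}}$, $\beta=\frac{c_{43}}{e_{45}}+\frac{c_{42}c_{53}}{e_{45}e_{52}}$. Reduced coordinates: $(x_3,x_4,x_5)$ on the cross section $H_1^{\mathrm{out},2}$ near the $R$-cycle and $(x_1,x_3,x_4)$ on $H_5^{\mathrm{out},2}$ near the $L$-cycle. $\tilde{\mathcal{E}}_1=\{(x_3,x_4,x_5):0<x_3<1,x_4>0,x_5>0,x_4<x_3^{e_{24}/e_{23}}\}$ is the set of points of $H_1^{\mathrm{out},2}$ that take a turn around the $R$-cycle (after $\xi_2$ they go to $\xi_3$); points with $x_4>x_3^{e_{24}/e_{23}}$ go from $\xi_2$ to $\xi_4$. $\mathcal{E}_1=\{(x_1,x_3,x_4):x_1>0,x_3>0,0<x_4<1,x_4>x_3^{e_{24}/e_{23}}\}$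 is the set of points of $H_5^{\mathrm{out},2}$ that take a turn around the $L$-cycle (after $\xi_2$ they go to $\xi_4$ and then $\xi_5$); its complement consists of points going from $\xi_2$ to $\xi_3$, i.e.\ back to the $R$-cycle. The transition map from $H_1^{\mathrm{out},2}$ via $\xi_2,\xi_4,\xi_5$ to $H_5^{\mathrm{out},2}$, defined for $x_4>x_3^{e_{24}/e_{23}}$, is $g_{RL}(x_3,x_4,x_5)=\big(x_4^{\mu}x_5^{\alpha},\ x_3x_4^{\nu}x_5^{\beta},\ x_4^{\rho}x_5^{\frac{e_{24}}{c_{25}}\rho}\big)$. *)

From Stdlib Require Import Reals.
Open Scope R_scope.

(* The 20 eigenvalue magnitudes of the Bowtie network (all real). *)
Record bowtie_eig := BowtieEig {
  e12 : R; c13 : R; c14 : R; c15 : R;   (* at xi_1 *)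
  c21 : R; c25 : R; e23 : R; e24 : R;   (* at xi_2 *)
  e31 : R; c32 : R; c34 : R; c35 : R;   (* at xi_3 *)
  e45 : R; c41 : R; c42 : R; c43 : R;   (* at xi_4 *)
  e52 : R; c51 : R; c53 : R; c54 : R    (* at xi_5 *)
}.

Definition eig_pos (p : bowtie_eig) : Prop :=
  0 < e12 p /\ 0 < c13 p /\ 0 < c14 p /\ 0 < c15 p /\
  0 < c21 p /\ 0 < c25 p /\ 0 < e23 p /\ 0 < e24 p /\
  0 < e31 p /\ 0 < c32 p /\ 0 < c34 p /\ 0 < c35 p /\
  0 < e45 p /\ 0 < c41 p /\ 0 < c42 p /\ 0 < c43 p /\
  0 < e52 p /\ 0 < c51 p /\ 0 < c53 p /\ 0 < c54 p.

Definition rho (p : bowtie_eig) : R :=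
  c42 p * c54 p * c25 p / (e24 p * e45 p * e52 p).
Definition rhot (p : bowtie_eig) : R :=
  c32 p * c13 p * c21 p / (e23 p * e31 p * e12 p).
Definition nu (p : bowtie_eig) : R :=
  - (e23 p / e24 p) + c25 p * c43 p / (e24 p * e45 p)
  + c53 p * c42 p * c25 p / (e45 p * e24 p * e52 p).
Definition mu (p : bowtie_eig) : R :=
  c21 p / e24 p + c25 p * c41 p / (e24 p * e45 p)
  + c51 p * c42 p * c25 p / (e45 p * e24 p * e52 p).
Definition delta (p : bowtie_eig) : R :=
  c43 p / e45 p + c53 p * c42 p / (e52 p * e45 p)
  - e23 p * c54 p * c42 p / (e52 p * e45 p * e24 p).
Definition deltat (p : bowtie_eig) : R :=
  c34 p / e31 p + c14 p * c32 p / (e12 p * e31 p)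
  - e24 p * c13 p * c32 p / (e12 p * e31 p * e23 p).
Definition alpha (p : bowtie_eig) : R :=
  c41 p / e45 p + c42 p * c51 p / (e45 p * e52 p).
Definition beta (p : bowtie_eig) : R :=
  c43 p / e45 p + c42 p * c53 p / (e45 p * e52 p).

(* Transition map H_1^{out,2} -> H_5^{out,2} (via xi_2, xi_4, xi_5),
   (x3,x4,x5) |-> (x1,x3,x4); all arguments are positive where used. *)
Definition g_RL (p : bowtie_eig) (x : R * R * R) : R * R * R :=
  let '(x3, x4, x5) := x in
  (Rpower x4 (mu p) * Rpower x5 (alpha p),
   x3 * Rpower x4 (nu p) * Rpower x5 (beta p),
   Rpower x4 (rho p) * Rpower x5 (e24 p / c25 p * rho p)).

Definition bowtie_Et1 (p : bowtie_eig) (x : R * R * R) : Prop :=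
  let '(x3, x4, x5) := x in
  0 < x3 < 1 /\ 0 < x4 /\ 0 < x5 /\ x4 < Rpower x3 (e24 p / e23 p).

Definition bowtie_E1 (p : bowtie_eig) (y : R * R * R) : Prop :=
  let '(x1, x3, x4) := y in
  0 < x1 /\ 0 < x3 /\ 0 < x4 < 1 /\ x4 > Rpower x3 (e24 p / e23 p).

(* In logarithmic coordinates x3 = exp(-a), x4 = exp(-b), x5 = exp(-c) (a, b, c > 0)
   the map g_RL is linear, and both conditions of the statement become linear
   inequalities: x4 > x3^(e24/e23) reads b < k a with k = e24/e23, and membership of
   the image in E_1 reads (rho - k nu) b - k delta c < k a.  Since delta < 0 the
   coefficient of c is positive, so taking c large (with a = 2, b = k) pushes the
   image out of E_1, while taking a large (with b = c = 1) puts it in. *)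

From Stdlib Require Import Reals Lra.
Open Scope R_scope.

Lemma Rpower_exp (t y : R) : Rpower (exp t) y = exp (y * t).
Proof. unfold Rpower; rewrite ln_exp; reflexivity. Qed.

Lemma exp_opp_in_unit (a : R) : 0 < a -> 0 < exp (- a) < 1.
Proof.
  intros Ha; split; [apply exp_pos |].
  rewrite <- exp_0; apply exp_increasing; lra.
Qed.

Lemma Rpower_exp_opp_lt (a b k : R) :
  Rpower (exp (- a)) k < exp (- b) <-> b < k * a.
Proof.
  rewrite Rpower_exp; split; intros H.
  - apply exp_lt_inv in H; lra.
  - apply exp_increasing; lra.
Qed.

Lemma exists_pos_mul_gt (s t : R) : 0 < s -> exists c, 0 < c /\ t < s * c.
Proof.
  intros Hs; exists ((Rabs t + 1) / s).
  pose proof (Rle_abs t); pose proof (Rabs_pos t).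
  split; [apply Rdiv_lt_0_compat; lra |].
  replace (s * ((Rabs t + 1) / s)) with (Rabs t + 1) by (field; lra); lra.
Qed.

Lemma g_RL_exp (p : bowtie_eig) (a b c : R) :
  g_RL p (exp (- a), exp (- b), exp (- c)) =
  (exp (- (mu p * b + alpha p * c)),
   exp (- (a + nu p * b + beta p * c)),
   exp (- (rho p * b + e24 p / c25 p * rho p * c))).
Proof. unfold g_RL; rewrite !Rpower_exp, <- !exp_plus; repeat f_equal; ring. Qed.

Section Positive_eigenvalues.

Variable p : bowtie_eig.
Hypothesis Hp : eig_pos p.

Lemma ratio_e24_e23_gt0 : 0 < e24 p / e23 p.
Proof.
  destruct Hp as (?&?&?&?&?&?&?&?&_); apply Rdiv_lt_0_compat; assumption.
Qed.

Lemma rho_gt0 : 0 < rho p.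
Proof.
  destruct Hp as (?&?&?&?&?&?&?&?&?&?&?&?&?&?&?&?&?&?&?&?).
  unfold rho; apply Rdiv_lt_0_compat; repeat apply Rmult_lt_0_compat; assumption.
Qed.

Lemma exponent_x5_gt0 : 0 < e24 p / c25 p * rho p.
Proof.
  pose proof rho_gt0.
  destruct Hp as (?&?&?&?&?&?&?&?&_).
  apply Rmult_lt_0_compat; [apply Rdiv_lt_0_compat |]; assumption.
Qed.

Lemma exponent_x5_sub_beta :
  e24 p / c25 p * rho p - e24 p / e23 p * beta p = - (e24 p / e23 p * delta p).
Proof.
  destruct Hp as (?&?&?&?&?&?&?&?&?&?&?&?&?&?&?&?&?&?&?&?).
  unfold rho, beta, delta; field; repeat split; lra.
Qed.

Lemma g_RL_exp_in_E1 (a b c : R) : 0 < b -> 0 < c ->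
  bowtie_E1 p (g_RL p (exp (- a), exp (- b), exp (- c))) <->
  (rho p - e24 p / e23 p * nu p) * b - e24 p / e23 p * delta p * c
    < e24 p / e23 p * a.
Proof.
  intros Hb Hc.
  pose proof rho_gt0 as Hrho; pose proof exponent_x5_gt0 as Hr.
  pose proof exponent_x5_sub_beta as Hbeta.
  rewrite g_RL_exp; unfold bowtie_E1, Rgt.
  rewrite Rpower_exp_opp_lt.
  assert (Hx4 : 0 < exp (- (rho p * b + e24 p / c25 p * rho p * c)) < 1)
    by (apply exp_opp_in_unit; nra).
  split.
  - intros (_ & _ & _ & Hlt); nra.
  - intros Hlt; repeat split; try apply exp_pos; try apply Hx4; nra.
Qed.

End Positive_eigenvalues.

Theorem proposition4p5 (p : bowtie_eig) :
  eig_pos p -> delta p < 0 -> deltat p < 0 -> e23 p > e24 p ->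
  (exists x3 x4 x5 : R,
      0 < x3 < 1 /\ 0 < x4 < 1 /\ 0 < x5 < 1 /\
      x4 > Rpower x3 (e24 p / e23 p) /\
      ~ bowtie_E1 p (g_RL p (x3, x4, x5))) /\
  (exists x3 x4 x5 : R,
      0 < x3 < 1 /\ 0 < x4 < 1 /\ 0 < x5 < 1 /\
      x4 > Rpower x3 (e24 p / e23 p) /\
      bowtie_E1 p (g_RL p (x3, x4, x5))).
Proof.
  intros Hp Hdelta _ _.
  pose proof (ratio_e24_e23_gt0 p Hp) as Hk.
  set (k := e24 p / e23 p) in *.
  assert (Hkdelta : 0 < - (k * delta p)) by nra.
  set (L := rho p - k * nu p).
  split.
  - destruct (exists_pos_mul_gt _ (2 * k - L * k) Hkdelta) as (c & Hc & Hlarge).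
    (* [- (2)] rather than [-2], which would be read as a literal, not an opposite. *)
    exists (exp (- (2))), (exp (- k)), (exp (- c)).
    split; [| split; [| split; [| split]]]; try (apply exp_opp_in_unit; lra).
    + unfold Rgt; apply Rpower_exp_opp_lt; lra.
    + rewrite (g_RL_exp_in_E1 p Hp); fold k L; lra.
  - destruct (exists_pos_mul_gt _ (1 + Rabs (L - k * delta p)) Hk)
      as (a & Ha & Hlarge).
    pose proof (Rle_abs (L - k * delta p)); pose proof (Rabs_pos (L - k * delta p)).
    exists (exp (- a)), (exp (- (1))), (exp (- (1))).
    split; [| split; [| split; [| split]]]; try (apply exp_opp_in_unit; lra).
    + unfold Rgt; apply Rpower_exp_opp_lt; lra.
    + apply (g_RL_exp_in_E1 p Hp); fold k L; lra.
Qed.
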